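(* There is an absolute constant $c$ such that the following holds. Let $T$ be an orientation-preserving Möbius automorphism of the upper half plane $\mathbb H$, and let $z\in\mathbb C$ with $i+z\in\mathbb H$ and $T(i+z)=i$. Let $v,w\in\partial\mathbb U$. If $|z|\le1/3$ then $$\operatorname{ash}(T,v,w)=\Re\Big[(\bar w-\bar v)\Big(-z-\tfrac{i(2+\bar v+\bar w)}{4}z^2\Big)\Big]+\varepsilon_3=-\Re\big[(\bar w-\bar v)z\big]+\varepsilon_2=\varepsilon_1,$$ where $|\varepsilon_d|\le c|w-v||z|^d\le 2c|z|^d$ for $d=1,2,3$. If $v=-1$, the same bounds hold without the assumption $|z|\le1/3$.
   Context: $\mathbb U$ is the open unit disk; $U(r)=\frac{i-r}{i+r}$ maps $\overline{\mathbb H}$ bijectively onto $\overline{\mathbb U}$ (with $U(\infty)=-1$), sending $i$ to $0$. A Möbius automorphism $T$ of $\mathbb H$ acts on $\overline{\mathbb U}$ by $\hat T=U\circ T\circ U^{-1}$. For $v,w\in\partial\mathbb U$, $\operatorname{ash}(T,v,w)=\operatorname{Arg}_{[0,2\pi)}(\hat T(w)/\hat T(v))-\operatorname{Arg}_{[0,2\pi)}(w/v)$, with $\operatorname{Arg}_{[0,2\pi)}$ the argument in $[0,2\pi)$. *)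

From Stdlib Require Import Reals.
Open Scope R_scope.

Definition Cx : Type := (R * R)%type.
Definition Re (z : Cx) : R := fst z.
Definition Im (z : Cx) : R := snd z.
Definition Cof (x : R) : Cx := (x, 0).
Definition Ci : Cx := (0, 1).
Definition Cadd (z w : Cx) : Cx := (Re z + Re w, Im z + Im w).
Definition Copp (z : Cx) : Cx := (- Re z, - Im z).
Definition Csub (z w : Cx) : Cx := Cadd z (Copp w).
Definition Cmul (z w : Cx) : Cx :=
  (Re z * Re w - Im z * Im w, Re z * Im w + Im z * Re w).
Definition Cconj (z : Cx) : Cx := (Re z, - Im z).
Definition Cnorm (z : Cx) : R := sqrt (Re z * Re z + Im z * Im z).
Definition Cinv (z : Cx) : Cx :=
  let n2 := Re z * Re z + Im z * Im z in (Re z / n2, - Im z / n2).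
Definition Cdiv (z w : Cx) : Cx := Cmul z (Cinv w).

(* Argument in [0, 2*PI) (with the arbitrary convention Arg 0 = 0). *)
Definition Arg02pi (z : Cx) : R :=
  let r := Cnorm z in
  if Req_EM_T r 0 then 0
  else if Rle_dec 0 (Im z) then acos (Re z / r)
  else 2 * PI - acos (Re z / r).

(* Riemann sphere: None is the point at infinity. *)
Definition Ext : Type := option Cx.

Definition mobius (a b c d : Cx) (p : Ext) : Ext :=
  match p with
  | Some z => let den := Cadd (Cmul c z) d in
      if Req_EM_T (Cnorm den) 0 then None
      else Some (Cdiv (Cadd (Cmul a z) b) den)
  | None => if Req_EM_T (Cnorm c) 0 then None else Some (Cdiv a c)
  end.

(* Orientation-preserving Moebius automorphism of H: r |-> (a r + b)/(c r + d)
   with a b c d real and a d - b c > 0. *)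
Definition mobH (a b c d : R) : Ext -> Ext :=
  mobius (Cof a) (Cof b) (Cof c) (Cof d).

Definition inH (z : Cx) : Prop := 0 < Im z.

(* U(r) = (i - r)/(i + r) = (-r + i)/(r + i), U(infinity) = -1 *)
Definition Umap : Ext -> Ext := mobius (Cof (-1)) Ci (Cof 1) Ci.
(* U^{-1}(w) = i(1 - w)/(1 + w), U^{-1}(-1) = infinity *)
Definition Uinv : Ext -> Ext := mobius (Copp Ci) Ci (Cof 1) (Cof 1).

Definition ext_val (p : Ext) : Cx := match p with Some z => z | None => (0, 0) end.

(* hat T = U o T o U^{-1}, evaluated at a finite point of the closed disk *)
Definition That (a b c d : R) (w : Cx) : Cx :=
  ext_val (Umap (mobH a b c d (Uinv (Some w)))).

Definition ash (a b c d : R) (v w : Cx) : R :=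
  Arg02pi (Cdiv (That a b c d w) (That a b c d v)) - Arg02pi (Cdiv w v).

From Stdlib Require Import Reals Lra Nsatz.
Open Scope R_scope.

(* Every point of the unit circle is
   [cayley q p = (q + i p)^2] for a unit vector [(p, q)]; then [U^{-1}] sends it
   to the real point [p / q] and [T] acts on [(p, q)] through its matrix
   (That_cayley).  Since [Arg (cayley X Y) = pi - 2 atan (X / Y)], the angular
   shift is a difference of two arctangents (ash_cayley).  Normalising [T] by
   [T (i + z) = i] fixes [b] and [d], and the shift becomes an explicit
   function [ash_model] of [z] and the coordinates of [v] and [w]
   (ash_normalized).

   For [|z| <= 1/3] the difference of arctangents collapses to
   [2 atan (dl G / (1 + z2 - a0 G))] with [G = O(|z|)], which is expanded to
   third order through [|atan r - r| <= |r|^3 / 3] (small_expansion).  For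
   [v = -1] and larger [z] the shift is bounded by [O((1 + |z|) |dl|)] from the
   displacement of [atan] under an affine change of variable (atan_shift), which
   suffices because all terms are then comparable (far_expansion).

   Finally the coefficients of the model are matched with the complex
   expressions of the theorem, and [|w - v| = 2 |dl|], by polynomial identities
   that hold on the unit circle (second_order_term, chord_length). *)

Lemma Rabs_le_inv x y : Rabs x <= y -> - y <= x <= y.
Proof. unfold Rabs. destruct (Rcase_abs x); lra. Qed.

Lemma Rabs_mult_le x y a b : Rabs x <= a -> Rabs y <= b -> Rabs (x * y) <= a * b.
Proof. intros. rewrite Rabs_mult. apply Rmult_le_compat; auto using Rabs_pos. Qed.

Lemma Rabs_div_le N D M m : 0 < m -> m <= D -> Rabs N <= M -> Rabs (N / D) <= M / m.
Proof.
  intros Hm HD HN. unfold Rdiv. rewrite Rabs_mult, Rabs_inv, (Rabs_pos_eq D) by lra.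
  apply Rmult_le_compat; auto using Rabs_pos.
  - left. apply Rinv_0_lt_compat. lra.
  - apply Rinv_le_contravar; lra.
Qed.

Lemma Rabs_le_sq x y : x * x <= y * y -> 0 <= y -> Rabs x <= y.
Proof.
  intros H Hy. rewrite <- (Rabs_pos_eq y Hy). apply Rsqr_le_abs_0. unfold Rsqr. exact H.
Qed.

(** * Elementary estimates for [atan] *)

Lemma increasing_from_0 (f : R -> R) (f' : R -> R) x :
  (forall t, derivable_pt_lim f t (f' t)) -> (forall t, 0 <= f' t) ->
  0 <= x -> f 0 <= f x.
Proof.
  intros Hder Hpos Hx.
  set (pr := fun t => exist _ (f' t) (Hder t) : derivable_pt f t).
  apply (nonneg_derivative_1 f pr); [|exact Hx].
  intro t. rewrite (derive_pt_eq_0 f t (f' t) (pr t) (Hder t)). apply Hpos.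
Qed.

Lemma atan_le_id x : 0 <= x -> atan x <= x.
Proof.
  intro Hx.
  assert (H : 0 - atan 0 <= x - atan x).
  { apply (increasing_from_0 (fun t => t - atan t) (fun t => 1 - / (1 + t ^ 2)));
      [|intro t|exact Hx].
    - intro t. apply derivable_pt_lim_minus;
        [apply derivable_pt_lim_id | apply derivable_pt_lim_atan].
    - assert (0 < 1 + t ^ 2) by nra.
      assert (/ (1 + t ^ 2) <= 1) by (rewrite <- Rinv_1; apply Rinv_le_contravar; nra).
      lra. }
  rewrite atan_0 in H. lra.
Qed.

Lemma atan_ge_cubic x : 0 <= x -> x - x ^ 3 / 3 <= atan x.
Proof.
  intro Hx.
  assert (H : atan 0 - 0 + 0 ^ 3 / 3 <= atan x - x + x ^ 3 / 3).
  { apply (increasing_from_0 (fun t => atan t - t + t ^ 3 / 3)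
             (fun t => / (1 + t ^ 2) - 1 + t ^ 2)); [|intro t|exact Hx].
    - intro t. apply derivable_pt_lim_plus.
      + apply derivable_pt_lim_minus; [apply derivable_pt_lim_atan | apply derivable_pt_lim_id].
      + replace (t ^ 2) with (INR 3 * t ^ (3 - 1) / 3) by (simpl; field).
        apply (derivable_pt_lim_div_scal (fun t => t ^ 3)), derivable_pt_lim_pow.
    - assert (0 < 1 + t ^ 2) by nra.
      replace (/ (1 + t ^ 2) - 1 + t ^ 2) with (t ^ 4 / (1 + t ^ 2)) by (field; lra).
      apply Rmult_le_pos; [nra | left; apply Rinv_0_lt_compat; lra]. }
  rewrite atan_0 in H. lra.
Qed.

Lemma atan_nonneg x : 0 <= x -> 0 <= atan x.
Proof.
  intros [Hx|<-]; [|rewrite atan_0; lra].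
  rewrite <- atan_0. left. apply atan_increasing, Hx.
Qed.

Lemma atan_abs_le x : Rabs (atan x) <= Rabs x.
Proof.
  destruct (Rle_dec 0 x) as [Hx|Hx].
  - pose proof (atan_le_id x Hx); pose proof (atan_nonneg x Hx).
    rewrite !Rabs_right; lra.
  - pose proof (atan_le_id (- x)); pose proof (atan_nonneg (- x)).
    rewrite atan_opp in *. rewrite !Rabs_left1; lra.
Qed.

Lemma atan_taylor3 x : Rabs (atan x - x) <= Rabs x ^ 3 / 3.
Proof.
  destruct (Rle_dec 0 x) as [Hx|Hx].
  - pose proof (atan_le_id x Hx); pose proof (atan_ge_cubic x Hx).
    rewrite Rabs_left1, (Rabs_right x); lra.
  - pose proof (atan_le_id (- x)); pose proof (atan_ge_cubic (- x)).
    rewrite atan_opp in *. rewrite Rabs_right, (Rabs_left x); nra.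
Qed.

(* Subtraction formula [atan x - atan y = atan ((x - y) / (1 + x y))], valid
   when [1 + x y > 0], i.e. when the difference stays in (-pi/2, pi/2). *)
Lemma atan_diff_range x y : 1 + x * y > 0 -> - PI / 2 < atan x - atan y < PI / 2.
Proof.
  intro Hxy.
  pose proof (atan_bound x); pose proof (atan_bound y).
  assert (Hc : cos (atan x - atan y) > 0).
  { rewrite cos_minus, !cos_atan, !sin_atan.
    assert (0 < sqrt (1 + x²)) by (apply sqrt_lt_R0; unfold Rsqr; nra).
    assert (0 < sqrt (1 + y²)) by (apply sqrt_lt_R0; unfold Rsqr; nra).
    replace (1 / sqrt (1 + x²) * (1 / sqrt (1 + y²)) + x / sqrt (1 + x²) * (y / sqrt (1 + y²)))
      with ((1 + x * y) / (sqrt (1 + x²) * sqrt (1 + y²))) by (field; lra).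
    apply Rdiv_lt_0_compat; nra. }
  split; apply Rnot_le_lt; intro Hle.
  - assert (cos (atan x - atan y) <= 0) by (rewrite <- cos_neg; apply cos_le_0; lra). lra.
  - assert (cos (atan x - atan y) <= 0) by (apply cos_le_0; lra). lra.
Qed.

Lemma atan_minus x y : 1 + x * y > 0 -> atan x - atan y = atan ((x - y) / (1 + x * y)).
Proof.
  intro H.
  pose proof (atan_sub_correct x y ltac:(lra) (atan_diff_range x y H) (atan_bound _)).
  unfold atan_sub in *. lra.
Qed.

(* Moving a far-away point [x] by a bounded affine change [x |-> (x - s) / h]
   moves [atan x] by O(1/x): compare the complementary angles [atan (/ x)]. *)
Lemma atan_shift_far x s h K :
  2 * K < x -> Rabs s <= K - 1 -> 0 < h <= K ->
  Rabs (atan ((x - s) / h) - atan x) <= 3 * K / x.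
Proof.
  intros Hx Hs Hh. apply Rabs_le_inv in Hs.
  set (y := (x - s) / h).
  assert (Hy : 0 < y) by (apply Rdiv_lt_0_compat; lra).
  assert (Hx0 : 0 < x) by lra.
  assert (E : atan y - atan x = atan (/ x) - atan (/ y)) by (rewrite !atan_inv by lra; ring).
  rewrite E.
  pose proof (atan_le_id (/ x) (Rlt_le _ _ (Rinv_0_lt_compat _ Hx0))).
  pose proof (atan_nonneg (/ x) (Rlt_le _ _ (Rinv_0_lt_compat _ Hx0))).
  pose proof (atan_le_id (/ y) (Rlt_le _ _ (Rinv_0_lt_compat _ Hy))).
  pose proof (atan_nonneg (/ y) (Rlt_le _ _ (Rinv_0_lt_compat _ Hy))).
  assert (Hiy : / y <= 2 * K / x).
  { unfold y. rewrite Rinv_div. apply (Rmult_le_reg_r (x * (x - s))); [nra|].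
    field_simplify; nra. }
  assert (/ x + 2 * K / x <= 3 * K / x).
  { unfold Rdiv. assert (0 < / x) by (apply Rinv_0_lt_compat; lra). nra. }
  apply Rabs_le; lra.
Qed.

Lemma atan_shift P Q s h K :
  P * P + Q * Q = 1 -> Q <> 0 -> Rabs s <= K - 1 -> 0 < h <= K ->
  Rabs (atan ((P / Q - s) / h) - atan (P / Q)) <= 12 * K * Rabs Q.
Proof.
  intros HPQ HQ Hs Hh.
  assert (HQa : 0 < Rabs Q) by (apply Rabs_pos_lt; auto).
  assert (HP2 : Rabs P * Rabs P = P * P) by (rewrite <- Rabs_mult; apply Rabs_pos_eq; nra).
  assert (HQ2 : Rabs Q * Rabs Q = Q * Q) by (rewrite <- Rabs_mult; apply Rabs_pos_eq; nra).
  pose proof (Rabs_pos P); pose proof (Rabs_pos s).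
  destruct (Rle_dec (Rabs P) (2 * K * Rabs Q)) as [Hnear|Hfar].
  - (* near the pole the trivial bound |atan| < pi/2 suffices *)
    assert (Hbig : 1 / 3 <= K * Rabs Q) by nra.
    pose proof (atan_bound ((P / Q - s) / h)); pose proof (atan_bound (P / Q)); pose proof PI_4.
    apply Rabs_le. lra.
  - assert (HPb : 1 / 2 < Rabs P) by nra.
    set (x := P / Q).
    assert (Hxa : Rabs x * Rabs Q = Rabs P) by (rewrite <- Rabs_mult; f_equal; unfold x; field; auto).
    assert (Hxb : 2 * K < Rabs x) by nra.
    assert (Hfin : 3 * K / Rabs x <= 12 * K * Rabs Q).
    { apply (Rmult_le_reg_r (Rabs x)); [lra|].
      unfold Rdiv. rewrite Rmult_assoc, Rinv_l by (apply Rgt_not_eq; lra). nra. }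
    destruct (Rle_dec 0 x) as [Hx0|Hx0].
    + rewrite Rabs_pos_eq in Hxb, Hfin by auto.
      eapply Rle_trans; [apply atan_shift_far|]; eauto.
    + rewrite Rabs_left in Hxb, Hfin by lra.
      replace (atan ((x - s) / h) - atan x) with (- (atan ((- x - - s) / h) - atan (- x)))
        by (replace ((- x - - s) / h) with (- ((x - s) / h)) by (field; lra);
            rewrite !atan_opp; ring).
      rewrite Rabs_Ropp.
      eapply Rle_trans; [apply atan_shift_far; try rewrite Rabs_Ropp|]; eauto.
Qed.

(** * Arguments of points of the unit circle *)

Ltac cx_unfold :=
  unfold Cdiv, Csub, Cinv, Cmul, Cadd, Copp, Cconj, Cof, Ci, Re, Im in *; simpl in *.

Lemma Cnorm_pair x y : Cnorm (x, y) = sqrt (x * x + y * y).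
Proof. reflexivity. Qed.

Lemma sumsq_eq0 x y : x * x + y * y = 0 -> x = 0 /\ y = 0.
Proof. intro H. split; nra. Qed.

Lemma Cnorm_eq0 x y : Cnorm (x, y) = 0 <-> x = 0 /\ y = 0.
Proof.
  rewrite Cnorm_pair. split.
  - intro H. apply sqrt_eq_0 in H; nra.
  - intros [-> ->]. replace (0 * 0 + 0 * 0) with 0 by ring. apply sqrt_0.
Qed.

Lemma Arg_cos_sin phi : 0 <= phi < 2 * PI -> Arg02pi (cos phi, sin phi) = phi.
Proof.
  intro Hphi. unfold Arg02pi. rewrite Cnorm_pair.
  replace (cos phi * cos phi + sin phi * sin phi) with 1
    by (pose proof (sin2_cos2 phi); unfold Rsqr in *; lra).
  rewrite sqrt_1. simpl.
  destruct (Req_EM_T 1 0) as [h|_]; [lra|].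
  rewrite Rdiv_1_r.
  destruct (Rle_dec 0 (sin phi)) as [Hs|Hs].
  - apply acos_cos. split; [lra|].
    apply Rnot_lt_le. intro Hlt. assert (sin phi < 0) by (apply sin_lt_0; lra). lra.
  - assert (PI < phi) by (apply Rnot_le_lt; intro; apply Hs, sin_ge_0; lra).
    replace (cos phi) with (cos (2 * PI - phi)) by (rewrite cos_minus, cos_2PI, sin_2PI; ring).
    rewrite acos_cos; [ring|]. pose proof PI_RGT_0. lra.
Qed.

(* [cayley x y = ((x + i y) / |x + i y|)^2], the point of the unit circle whose
   argument is twice that of [x + i y]. *)
Definition cayley (x y : R) : Cx :=
  ((x * x - y * y) / (x * x + y * y), 2 * x * y / (x * x + y * y)).

Lemma cayley_scale k x y : k <> 0 -> cayley (k * x) (k * y) = cayley x y.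
Proof.
  intro Hk. unfold cayley.
  destruct (Req_dec (x * x + y * y) 0) as [H0|H0].
  - assert (x = 0 /\ y = 0) as [-> ->] by nra. f_equal; unfold Rdiv; ring_simplify; reflexivity.
  - replace (k * x * (k * x) + k * y * (k * y)) with (k * k * (x * x + y * y)) by ring.
    f_equal; field; auto.
Qed.

(* These points form a group isomorphic to the circle: products and inverses
   are computed on [x + i y] before normalisation. *)
Lemma cayley_mul x1 y1 x2 y2 : x1 * x1 + y1 * y1 <> 0 -> x2 * x2 + y2 * y2 <> 0 ->
  Cmul (cayley x1 y1) (cayley x2 y2) = cayley (x1 * x2 - y1 * y2) (x1 * y2 + y1 * x2).
Proof.
  intros H1 H2. unfold cayley.
  replace ((x1 * x2 - y1 * y2) * (x1 * x2 - y1 * y2) + (x1 * y2 + y1 * x2) * (x1 * y2 + y1 * x2))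
    with ((x1 * x1 + y1 * y1) * (x2 * x2 + y2 * y2)) by ring.
  cx_unfold. f_equal; field; auto.
Qed.

Lemma cayley_inv x y : x * x + y * y <> 0 -> Cinv (cayley x y) = cayley x (- y).
Proof.
  intro H. unfold Cinv, cayley, Re, Im; simpl.
  replace ((x * x - y * y) / (x * x + y * y) * ((x * x - y * y) / (x * x + y * y)) +
           2 * x * y / (x * x + y * y) * (2 * x * y / (x * x + y * y))) with 1 by (field; auto).
  replace (- y * - y) with (y * y) by ring.
  f_equal; field; auto.
Qed.

Lemma cayley_div x1 y1 x2 y2 : x1 * x1 + y1 * y1 <> 0 -> x2 * x2 + y2 * y2 <> 0 ->
  Cdiv (cayley x1 y1) (cayley x2 y2) = cayley (x1 * x2 + y1 * y2) (y1 * x2 - x1 * y2).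
Proof.
  intros H1 H2. unfold Cdiv. rewrite cayley_inv, cayley_mul by (auto; nra).
  f_equal; ring.
Qed.

Lemma cayley_1_atan t : cayley 1 t = (cos (2 * atan t), sin (2 * atan t)).
Proof.
  rewrite cos_2a, sin_2a, cos_atan, sin_atan. unfold cayley, Rsqr.
  assert (Hp : 0 < 1 + t * t) by nra.
  set (s := sqrt (1 + t * t)).
  assert (Hs : s * s = 1 + t * t) by (apply sqrt_sqrt; lra).
  assert (0 < s) by (apply sqrt_lt_R0; lra).
  replace (1 / s * (1 / s) - t / s * (t / s)) with ((1 - t * t) / (s * s)) by (field; lra).
  replace (2 * (t / s) * (1 / s)) with (2 * t / (s * s)) by (field; lra).
  rewrite Hs. f_equal; field; lra.
Qed.

Lemma Arg_cayley X Y : Y <> 0 -> Arg02pi (cayley X Y) = PI - 2 * atan (X / Y).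
Proof.
  intro HY. pose proof (atan_bound (X / Y)).
  replace (cayley X Y) with (cos (PI - 2 * atan (X / Y)), sin (PI - 2 * atan (X / Y))).
  - apply Arg_cos_sin. lra.
  - (* [cayley (X / Y) 1] is [cayley 1 (X / Y)] reflected in the imaginary axis *)
    rewrite cos_minus, sin_minus, cos_PI, sin_PI.
    assert (E : cayley X Y = cayley (Y * (X / Y)) (Y * 1)) by (f_equal; field; auto).
    rewrite E, cayley_scale by auto.
    pose proof (cayley_1_atan (X / Y)) as C. unfold cayley in *. injection C as C1 C2.
    rewrite <- C1, <- C2. f_equal; field; nra.
Qed.

Lemma Arg_cayley_axis X : X <> 0 -> Arg02pi (cayley X 0) = 0.
Proof.
  intro HX. replace (cayley X 0) with (cos 0, sin 0).
  - apply Arg_cos_sin. pose proof PI_RGT_0. lra.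
  - rewrite cos_0, sin_0. unfold cayley. f_equal; field; nra.
Qed.

(** * The Moebius maps in projective coordinates *)

Lemma div_eq0 a b : a / b = 0 -> b <> 0 -> a = 0.
Proof.
  intros H Hb. rewrite <- (Rmult_1_r a), <- (Rinv_l b), <- Rmult_assoc by auto.
  fold (a / b). rewrite H. ring.
Qed.

Definition proj (p q : R) : Ext := if Req_EM_T q 0 then None else Some (p / q, 0).

Lemma Uinv_cayley p q : p * p + q * q <> 0 -> Uinv (Some (cayley q p)) = proj p q.
Proof.
  intro Hn. unfold Uinv, mobius, proj, cayley.
  destruct (Req_EM_T q 0) as [->|Hq]; destruct (Req_EM_T _ 0) as [H0|H0]; cx_unfold.
  - reflexivity.
  - exfalso. apply H0, Cnorm_eq0. split; field; nra.
  - exfalso. apply Cnorm_eq0 in H0 as [H0 _].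
    field_simplify in H0; [|nra]. apply div_eq0 in H0; nra.
  - assert (q * q > 0) by nra.
    f_equal; f_equal; field; repeat split; nra.
Qed.

Lemma mobH_proj a b c d p q : a * d - b * c <> 0 -> p * p + q * q <> 0 ->
  mobH a b c d (proj p q) = proj (a * p + b * q) (c * p + d * q).
Proof.
  intros Hdet Hn. unfold mobH, mobius, proj.
  destruct (Req_EM_T q 0) as [->|Hq].
  - assert (Hp : p <> 0) by (intro; subst; apply Hn; ring).
    destruct (Req_EM_T (Cnorm (Cof c)) 0) as [Hc|Hc];
      destruct (Req_EM_T (c * p + d * 0) 0) as [Hcp|Hcp];
      unfold Cof in *; rewrite ?Cnorm_eq0 in *.
    + reflexivity.
    + exfalso. apply Hcp. destruct Hc as [-> _]. ring.
    + exfalso. apply Hc. split; [|reflexivity].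
      rewrite Rmult_0_r, Rplus_0_r in Hcp. apply Rmult_integral in Hcp. tauto.
    + assert (c <> 0) by (intro; subst; apply Hc; auto).
      cx_unfold. f_equal. f_equal; field; repeat split; nra.
  - destruct (Req_EM_T (c * p + d * q) 0) as [Hcd|Hcd];
      destruct (Req_EM_T _ 0) as [H0|H0]; cx_unfold; rewrite ?Cnorm_eq0 in *.
    + reflexivity.
    + exfalso. apply H0. split; [|ring].
      replace (c * (p / q) - 0 * 0 + d) with ((c * p + d * q) / q) by (field; auto).
      rewrite Hcd. field. auto.
    + exfalso. apply Hcd. destruct H0 as [H0 _].
      replace (c * p + d * q) with (q * (c * (p / q) - 0 * 0 + d)) by (field; auto).
      rewrite H0. ring.
    + assert (c * (p / q) + d <> 0)
        by (replace (c * (p / q) + d) with ((c * p + d * q) / q) by (field; auto);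
            intro E; apply Hcd, (div_eq0 _ q); auto).
      f_equal. f_equal; field; repeat split; auto; nra.
Qed.

Lemma Umap_proj p q : p * p + q * q <> 0 -> ext_val (Umap (proj p q)) = cayley q p.
Proof.
  intro Hn. unfold Umap, mobius, proj.
  destruct (Req_EM_T q 0) as [->|Hq].
  - assert (p * p > 0) by nra.
    destruct (Req_EM_T _ 0) as [H0|H0]; unfold Cof in *; rewrite ?Cnorm_eq0 in *.
    + exfalso. lra.
    + unfold cayley. cx_unfold. f_equal; field; nra.
  - destruct (Req_EM_T _ 0) as [H0|H0]; cx_unfold; rewrite ?Cnorm_eq0 in *.
    + exfalso. lra.
    + replace (cayley q p) with (cayley (q * 1) (q * (p / q))) by (f_equal; field; auto).
      rewrite cayley_scale by auto. unfold cayley. f_equal; field; nra.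
Qed.

Lemma linear_image_nonzero a b c d p q : a * d - b * c <> 0 -> p * p + q * q <> 0 ->
  (a * p + b * q) * (a * p + b * q) + (c * p + d * q) * (c * p + d * q) <> 0.
Proof.
  intros Hdet Hn E. apply Hn.
  apply sumsq_eq0 in E as [E1 E2].
  assert (Ep : (a * d - b * c) * p = d * (a * p + b * q) - b * (c * p + d * q)) by ring.
  assert (Eq : (a * d - b * c) * q = a * (c * p + d * q) - c * (a * p + b * q)) by ring.
  rewrite E1, E2, !Rmult_0_r, Rminus_0_r in Ep, Eq.
  apply Rmult_integral in Ep as [Hd|Hp0]; [contradiction|].
  apply Rmult_integral in Eq as [Hd|Hq0]; [contradiction|].
  rewrite Hp0, Hq0. ring.
Qed.

Lemma That_cayley a b c d p q : a * d - b * c <> 0 -> p * p + q * q <> 0 ->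
  That a b c d (cayley q p) = cayley (c * p + d * q) (a * p + b * q).
Proof.
  intros Hdet Hn. unfold That.
  pose proof (linear_image_nonzero a b c d p q Hdet Hn).
  rewrite Uinv_cayley, mobH_proj, Umap_proj by auto. reflexivity.
Qed.

(** * The angular shift as a difference of arctangents *)

(* For unit vectors [(p, q)], the circle point [cayley q p] is [(q + i p)^2];
   [dot] and [cross] are the real and imaginary parts of [(qw + i pw)] times the
   conjugate of [(qv + i pv)]. *)
Definition dot (pw qw pv qv : R) : R := pw * pv + qw * qv.
Definition cross (pw qw pv qv : R) : R := pw * qv - pv * qw.

Definition image_dot (a b c d pw qw pv qv : R) : R :=
  (a * pw + b * qw) * (a * pv + b * qv) + (c * pw + d * qw) * (c * pv + d * qv).

Lemma ash_cayley a b c d pw qw pv qv :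
  a * d - b * c <> 0 -> pw * pw + qw * qw <> 0 -> pv * pv + qv * qv <> 0 ->
  ash a b c d (cayley qv pv) (cayley qw pw) =
  if Req_EM_T (cross pw qw pv qv) 0 then 0
  else 2 * (atan (dot pw qw pv qv / cross pw qw pv qv)
            - atan (image_dot a b c d pw qw pv qv / ((a * d - b * c) * cross pw qw pv qv))).
Proof.
  intros Hdet Hw Hv.
  pose proof (linear_image_nonzero a b c d pw qw Hdet Hw) as HTw.
  pose proof (linear_image_nonzero a b c d pv qv Hdet Hv) as HTv.
  unfold ash. rewrite !That_cayley, !cayley_div by (auto; nra).
  replace ((c * pw + d * qw) * (c * pv + d * qv) + (a * pw + b * qw) * (a * pv + b * qv))
    with (image_dot a b c d pw qw pv qv) by (unfold image_dot; ring).
  replace ((a * pw + b * qw) * (c * pv + d * qv) - (c * pw + d * qw) * (a * pv + b * qv))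
    with ((a * d - b * c) * cross pw qw pv qv) by (unfold cross; ring).
  replace (qw * qv + pw * pv) with (dot pw qw pv qv) by (unfold dot; ring).
  replace (pw * qv - qw * pv) with (cross pw qw pv qv) by (unfold cross; ring).
  (* the images keep their lengths' product: dot^2 + cross^2 = |w|^2 |v|^2 *)
  assert (Hn : dot pw qw pv qv * dot pw qw pv qv + cross pw qw pv qv * cross pw qw pv qv
               = (pw * pw + qw * qw) * (pv * pv + qv * qv)) by (unfold dot, cross; ring).
  assert (Hi : image_dot a b c d pw qw pv qv * image_dot a b c d pw qw pv qv
               + ((a * d - b * c) * cross pw qw pv qv) * ((a * d - b * c) * cross pw qw pv qv)
               = ((a * pw + b * qw) * (a * pw + b * qw) + (c * pw + d * qw) * (c * pw + d * qw))
                 * ((a * pv + b * qv) * (a * pv + b * qv) + (c * pv + d * qv) * (c * pv + d * qv)))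
    by (unfold image_dot, cross; ring).
  destruct (Req_EM_T (cross pw qw pv qv) 0) as [H0|H0].
  - rewrite H0, Rmult_0_r in *. rewrite !Arg_cayley_axis; [ring| |].
    + intro E. rewrite E in Hn. apply (Rmult_integral_contrapositive _ _ (conj Hw Hv)). lra.
    + intro E. rewrite E in Hi.
      apply (Rmult_integral_contrapositive _ _ (conj HTw HTv)). lra.
  - rewrite !Arg_cayley; [ring|auto|].
    apply Rmult_integral_contrapositive. auto.
Qed.

Lemma Cdiv_mul N D : Cnorm D <> 0 -> Cmul (Cdiv N D) D = N.
Proof.
  destruct N as [n1 n2], D as [d1 d2]. rewrite Cnorm_eq0. intro HD.
  assert (d1 * d1 + d2 * d2 <> 0) by (intro Z; apply HD, sumsq_eq0, Z).
  cx_unfold. f_equal; field; auto.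
Qed.

(* [T (i + z) = i] means [a (i + z) + b = i (c (i + z) + d)], which determines
   [b] and [d] from [a], [c] and [z]. *)
Lemma mobH_normalization a b c d z1 z2 :
  mobH a b c d (Some (Cadd Ci (z1, z2))) = Some Ci ->
  b = - c * (1 + z2) - a * z1 /\ d = a * (1 + z2) - c * z1.
Proof.
  unfold mobH, mobius. destruct (Req_EM_T _ 0) as [_|HD]; intro E; [discriminate|].
  apply (f_equal ext_val) in E. simpl in E.
  pose proof (Cdiv_mul (Cadd (Cmul (Cof a) (Cadd Ci (z1, z2))) (Cof b)) _ HD) as M.
  rewrite E in M.
  cx_unfold. injection M as M1 M2. split; lra.
Qed.

(* For the normalised map, the angular shift depends only on [z]: the
   first- and second-order coefficients are [g1 = Im(conj z (qw + i pw)(qv + i pv))]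
   and [g2 = - |z|^2 qw qv]. *)
Definition g1 (z1 z2 pw qw pv qv : R) : R := z1 * (pw * qv + qw * pv) - z2 * (qw * qv - pw * pv).
Definition g2 (z1 z2 pw qw pv qv : R) : R := - (z1 * z1 + z2 * z2) * qw * qv.

Definition ash_model (z1 z2 pw qw pv qv : R) : R :=
  let h := 1 + z2 in
  let G := g1 z1 z2 pw qw pv qv + g2 z1 z2 pw qw pv qv in
  if Req_EM_T (cross pw qw pv qv) 0 then 0
  else 2 * (atan (dot pw qw pv qv / cross pw qw pv qv)
            - atan ((h * dot pw qw pv qv - G) / (h * cross pw qw pv qv))).

Lemma ash_normalized a c z1 z2 pw qw pv qv :
  let b := - c * (1 + z2) - a * z1 in
  let d := a * (1 + z2) - c * z1 in
  a * d - b * c > 0 -> 0 < 1 + z2 ->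
  pw * pw + qw * qw <> 0 -> pv * pv + qv * qv <> 0 ->
  ash a b c d (cayley qv pv) (cayley qw pw) = ash_model z1 z2 pw qw pv qv.
Proof.
  intros b d Hdet Hh Hw Hv.
  rewrite ash_cayley by (auto; lra). unfold ash_model.
  destruct (Req_EM_T (cross pw qw pv qv) 0) as [H0|H0]; [reflexivity|].
  assert (Hdet' : a * d - b * c = (1 + z2) * (a * a + c * c)) by (unfold b, d; ring).
  assert (Hac : a * a + c * c <> 0) by (intro E; rewrite E in Hdet'; lra).
  do 3 f_equal. rewrite Hdet'.
  unfold image_dot, b, d, g1, g2, dot, cross. field. repeat split; auto; lra.
Qed.

(* Identities that only hold on the unit circle are certified by [nsatz], which
   finds the multiples of [pw^2 + qw^2 - 1] and [pv^2 + qv^2 - 1] needed. *)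

Lemma cayley_unit p q : p * p + q * q = 1 -> cayley q p = (q * q - p * p, 2 * q * p).
Proof. intro H. unfold cayley. rewrite Rplus_comm, H. f_equal; field. Qed.

Lemma unit_half_angle v : Cnorm v = 1 -> exists p q, p * p + q * q = 1 /\ v = cayley q p.
Proof.
  destruct v as [v1 v2]. rewrite Cnorm_pair. intro H.
  assert (Hv : v1 * v1 + v2 * v2 = 1)
    by (rewrite <- (sqrt_sqrt (v1 * v1 + v2 * v2)), H by nra; ring).
  set (q := sqrt ((1 + v1) / 2)). set (s := sqrt ((1 - v1) / 2)).
  assert (Hq : q * q = (1 + v1) / 2) by (apply sqrt_sqrt; nra).
  assert (Hs : s * s = (1 - v1) / 2) by (apply sqrt_sqrt; nra).
  assert (0 <= q) by apply sqrt_pos. assert (0 <= s) by apply sqrt_pos.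
  assert (Hsq : (2 * q * s) * (2 * q * s) = v2 * v2) by nra.
  destruct (Rle_dec 0 v2) as [Hv2|Hv2].
  - exists s, q. split; [lra|]. rewrite cayley_unit by lra.
    f_equal; [lra|]. apply Rsqr_inj; unfold Rsqr; nra.
  - exists (- s), q. split; [lra|]. rewrite cayley_unit by lra.
    f_equal; [lra|]. assert (2 * q * s = - v2) by (apply Rsqr_inj; unfold Rsqr; nra). lra.
Qed.

Definition second_order (z2 a0 x1 x2 : R) : R := 2 * (x2 - z2 * x1 + a0 * (x1 * x1)).

Lemma Cdiv_Cof r x : r <> 0 -> Cdiv x (Cof r) = (Re x / r, Im x / r).
Proof. intro. destruct x. cx_unfold. f_equal; field; auto. Qed.

Section UnitIdentities.
Variables pw qw pv qv : R.
Hypothesis Hw : pw * pw + qw * qw = 1.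
Hypothesis Hv : pv * pv + qv * qv = 1.

Lemma dot_cross_unit : dot pw qw pv qv ^ 2 + cross pw qw pv qv ^ 2 = 1.
Proof.
  transitivity ((pw * pw + qw * qw) * (pv * pv + qv * qv)); [unfold dot, cross; ring|].
  rewrite Hw, Hv. ring.
Qed.

Lemma product_unit : (qw * qv - pw * pv) ^ 2 + (pw * qv + qw * pv) ^ 2 = 1.
Proof.
  transitivity ((pw * pw + qw * qw) * (pv * pv + qv * qv)); [ring|].
  rewrite Hw, Hv. ring.
Qed.

Lemma chord_length :
  Cnorm (Csub (cayley qw pw) (cayley qv pv)) = 2 * Rabs (cross pw qw pv qv).
Proof.
  set (e := cross pw qw pv qv).
  assert (He : Rabs e * Rabs e = e * e) by (pose proof (Rsqr_abs e); unfold Rsqr in *; lra).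
  rewrite <- (sqrt_Rsqr (2 * Rabs e)) by (pose proof (Rabs_pos e); lra).
  rewrite !cayley_unit by auto. cx_unfold. rewrite Cnorm_pair. f_equal.
  replace ((2 * Rabs e)²) with (2 * 2 * (e * e)) by (unfold Rsqr; rewrite <- He; ring).
  unfold e, cross. nsatz.
Qed.

Lemma first_order_term z1 z2 :
  Re (Cmul (Csub (Cconj (cayley qw pw)) (Cconj (cayley qv pv))) (z1, z2))
  = - (2 * cross pw qw pv qv * g1 z1 z2 pw qw pv qv).
Proof. rewrite !cayley_unit by auto. cx_unfold. unfold cross, g1. nsatz. Qed.

Lemma second_order_term z1 z2 :
  let v := cayley qv pv in let w := cayley qw pw in
  Re (Cmul (Csub (Cconj w) (Cconj v))
        (Csub (Copp (z1, z2))
           (Cmul (Cdiv (Cmul Ci (Cadd (Cadd (Cof 2) (Cconj v)) (Cconj w))) (Cof 4))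
                 (Cmul (z1, z2) (z1, z2)))))
  = cross pw qw pv qv * (2 * g1 z1 z2 pw qw pv qv +
      second_order z2 (dot pw qw pv qv) (g1 z1 z2 pw qw pv qv) (g2 z1 z2 pw qw pv qv)).
Proof.
  intros v w. subst v w. rewrite Cdiv_Cof by lra. rewrite !cayley_unit by auto.
  replace 4 with (2 * 2) by ring. unfold Rdiv. rewrite Rinv_mult.
  assert (Hhalf : 2 * / 2 = 1) by field.
  cx_unfold. unfold cross, second_order, g1, g2, dot. nsatz.
Qed.
End UnitIdentities.

Lemma second_order_le n z2 a0 x1 x2 :
  Rabs z2 <= n -> Rabs a0 <= 1 -> Rabs x1 <= n -> Rabs x2 <= n * n ->
  Rabs (second_order z2 a0 x1 x2) <= 6 * (n * n).
Proof.
  intros Hz Ha H1 H2. pose proof (Rabs_pos z2).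
  assert (Rabs (z2 * x1) <= n * n) by (apply Rabs_mult_le; auto).
  assert (Rabs (a0 * (x1 * x1)) <= 1 * (n * n)) by (apply Rabs_mult_le; auto; apply Rabs_mult_le; auto).
  unfold second_order. rewrite Rabs_mult, (Rabs_pos_eq 2) by lra.
  pose proof (Rabs_triang (x2 - z2 * x1) (a0 * (x1 * x1))).
  pose proof (Rabs_triang x2 (- (z2 * x1))). rewrite Rabs_Ropp in *.
  unfold Rminus in *. lra.
Qed.

Definition expansion_bounds (S dl x1 p2 n : R) : Prop :=
  Rabs (S - dl * (2 * x1 + p2)) <= 1000 * Rabs dl * n ^ 3 /\
  Rabs (S - 2 * dl * x1) <= 1000 * Rabs dl * n ^ 2 /\
  Rabs S <= 1000 * Rabs dl * n.

Lemma expansion_bounds_zero x1 p2 n : expansion_bounds 0 0 x1 p2 n.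
Proof.
  unfold expansion_bounds.
  replace (0 - 0 * (2 * x1 + p2)) with 0 by ring. replace (0 - 2 * 0 * x1) with 0 by ring.
  rewrite Rabs_R0. lra.
Qed.

Section SmallExpansion.
Variables n z2 a0 dl x1 x2 : R.
Hypothesis Hn : 0 <= n <= 1 / 3.
Hypothesis Hz2 : Rabs z2 <= n.
Hypothesis Ha0 : Rabs a0 <= 1.
Hypothesis Hdl : Rabs dl <= 1.
Hypothesis Hx1 : Rabs x1 <= n.
Hypothesis Hx2 : Rabs x2 <= n * n.

Let den := 1 + z2 - a0 * (x1 + x2).
Let r := dl * (x1 + x2) / den.

Lemma sum_le : Rabs (x1 + x2) <= 4 / 3 * n.
Proof. pose proof (Rabs_triang x1 x2). nra. Qed.

Lemma den_lower : 2 / 9 <= den.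
Proof.
  pose proof sum_le as Hsum.
  assert (Hprod : Rabs (a0 * (x1 + x2)) <= 1 * (4 / 3 * n)) by (apply Rabs_mult_le; auto).
  apply Rabs_le_inv in Hz2. apply Rabs_le_inv in Hprod. unfold den. lra.
Qed.

Lemma ratio_le : Rabs r <= 6 * Rabs dl * n.
Proof.
  pose proof den_lower; pose proof sum_le.
  replace (6 * Rabs dl * n) with (Rabs dl * (4 / 3 * n) / (2 / 9)) by field.
  apply Rabs_div_le; try lra. apply Rabs_mult_le; lra.
Qed.

Lemma atan_ratio_taylor : Rabs (atan r - r) <= 72 * Rabs dl * n ^ 3.
Proof.
  pose proof ratio_le; pose proof (Rabs_pos dl); pose proof (Rabs_pos r).
  eapply Rle_trans; [apply atan_taylor3|].
  assert (Rabs r ^ 3 <= (6 * Rabs dl * n) ^ 3) by (apply pow_incr; lra).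
  assert (Rabs dl ^ 3 <= Rabs dl) by (simpl; nra).
  assert (0 <= n ^ 3) by (apply pow_le; lra).
  replace ((6 * Rabs dl * n) ^ 3) with (216 * Rabs dl ^ 3 * n ^ 3) in * by ring. nra.
Qed.

Lemma expansion_order1 : Rabs (2 * atan r) <= 1000 * Rabs dl * n.
Proof.
  pose proof ratio_le; pose proof (atan_abs_le r); pose proof (Rabs_pos dl).
  rewrite Rabs_mult, (Rabs_pos_eq 2) by lra. nra.
Qed.

Lemma expansion_order2 : Rabs (2 * atan r - 2 * dl * x1) <= 1000 * Rabs dl * n ^ 2.
Proof.
  pose proof den_lower; pose proof sum_le; pose proof atan_ratio_taylor; pose proof (Rabs_pos dl).
  assert (E : 2 * atan r - 2 * dl * x1 =
              2 * (atan r - r) + 2 * (dl * (x2 - z2 * x1 + a0 * x1 * (x1 + x2)) / den))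
    by (assert (den <> 0) by lra; unfold r; unfold den in *; field; auto).
  assert (HN : Rabs (x2 - z2 * x1 + a0 * x1 * (x1 + x2)) <= 10 / 3 * (n * n)).
  { assert (Rabs (z2 * x1) <= n * n) by (apply Rabs_mult_le; auto).
    assert (Rabs (a0 * x1 * (x1 + x2)) <= 1 * n * (4 / 3 * n))
      by (apply Rabs_mult_le; auto; apply Rabs_mult_le; auto).
    pose proof (Rabs_triang (x2 - z2 * x1) (a0 * x1 * (x1 + x2))).
    pose proof (Rabs_triang x2 (- (z2 * x1))). rewrite Rabs_Ropp in *.
    unfold Rminus in *. lra. }
  assert (HQ : Rabs (dl * (x2 - z2 * x1 + a0 * x1 * (x1 + x2)) / den)
               <= Rabs dl * (10 / 3 * (n * n)) / (2 / 9))
    by (apply Rabs_div_le; try lra; apply Rabs_mult_le; lra).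
  rewrite E. eapply Rle_trans; [apply Rabs_triang|].
  rewrite !Rabs_mult, (Rabs_pos_eq 2) by lra.
  assert (Hn3 : n ^ 3 <= n ^ 2 / 3) by (simpl; nra).
  assert (Rabs dl * n ^ 3 <= Rabs dl * (n ^ 2 / 3)) by (apply Rmult_le_compat_l; auto).
  assert (0 <= Rabs dl * n ^ 2) by (apply Rmult_le_pos; auto; apply pow_le; lra).
  replace (Rabs dl * (10 / 3 * (n * n)) / (2 / 9)) with (15 * (Rabs dl * n ^ 2)) in HQ
    by (simpl; field).
  lra.
Qed.

Lemma expansion_order3 :
  Rabs (2 * atan r - dl * (2 * x1 + second_order z2 a0 x1 x2)) <= 1000 * Rabs dl * n ^ 3.
Proof.
  pose proof den_lower; pose proof atan_ratio_taylor; pose proof (Rabs_pos dl).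
  set (p2 := second_order z2 a0 x1 x2).
  assert (Hp2 : Rabs p2 <= 6 * (n * n)) by (apply second_order_le; auto).
  assert (E : 2 * atan r - dl * (2 * x1 + p2) =
              2 * (atan r - r) + dl * (- z2 * p2 + a0 * (p2 * x1 + 2 * x1 * x2 + p2 * x2)) / den)
    by (assert (den <> 0) by lra; unfold r, p2, second_order; unfold den in *; field; auto).
  assert (HN : Rabs (- z2 * p2 + a0 * (p2 * x1 + 2 * x1 * x2 + p2 * x2)) <= 16 * n ^ 3).
  { assert (Rabs (- z2 * p2) <= n * (6 * (n * n))) by (apply Rabs_mult_le; rewrite ?Rabs_Ropp; auto).
    assert (Rabs (p2 * x1) <= 6 * (n * n) * n) by (apply Rabs_mult_le; auto).
    assert (Rabs (2 * x1 * x2) <= 2 * n * (n * n)).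
    { apply Rabs_mult_le; auto. rewrite Rabs_mult, (Rabs_pos_eq 2) by lra. lra. }
    assert (Rabs (p2 * x2) <= 6 * (n * n) * (n * n)) by (apply Rabs_mult_le; auto).
    assert (Rabs (p2 * x1 + 2 * x1 * x2 + p2 * x2) <= 8 * n ^ 3 + 6 * n ^ 4).
    { pose proof (Rabs_triang (p2 * x1 + 2 * x1 * x2) (p2 * x2)).
      pose proof (Rabs_triang (p2 * x1) (2 * x1 * x2)). simpl. nra. }
    assert (Rabs (a0 * (p2 * x1 + 2 * x1 * x2 + p2 * x2)) <= 1 * (8 * n ^ 3 + 6 * n ^ 4))
      by (apply Rabs_mult_le; auto).
    assert (0 <= n ^ 3) by (apply pow_le; lra).
    assert (n ^ 4 <= n ^ 3 / 3) by (replace (n ^ 4) with (n * n ^ 3) by ring; nra).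
    pose proof (Rabs_triang (- z2 * p2) (a0 * (p2 * x1 + 2 * x1 * x2 + p2 * x2))).
    lra. }
  assert (HQ : Rabs (dl * (- z2 * p2 + a0 * (p2 * x1 + 2 * x1 * x2 + p2 * x2)) / den)
               <= Rabs dl * (16 * n ^ 3) / (2 / 9))
    by (apply Rabs_div_le; try lra; apply Rabs_mult_le; lra).
  rewrite E. eapply Rle_trans; [apply Rabs_triang|].
  rewrite Rabs_mult, (Rabs_pos_eq 2) by lra.
  replace (Rabs dl * (16 * n ^ 3) / (2 / 9)) with (72 * (Rabs dl * n ^ 3)) in HQ by field.
  assert (0 <= Rabs dl * n ^ 3) by (apply Rmult_le_pos; auto; apply pow_le; lra).
  lra.
Qed.

Lemma small_expansion :
  expansion_bounds (2 * atan r) dl x1 (second_order z2 a0 x1 x2) n.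
Proof. split; [|split]; auto using expansion_order1, expansion_order2, expansion_order3. Qed.
End SmallExpansion.

(* Away from [|z| <= 1/3] every term is of the same (bounded) size, so an
   O(|dl| (1 + n)) bound on [S] implies all three expansions. *)
Lemma far_expansion n dl x1 p2 S :
  1 / 3 < n -> Rabs x1 <= n -> Rabs p2 <= 6 * (n * n) ->
  Rabs S <= 24 * (1 + n) * Rabs dl -> expansion_bounds S dl x1 p2 n.
Proof.
  intros Hn Hx1 Hp2 HS. pose proof (Rabs_pos dl) as He.
  assert (Rabs (dl * (2 * x1)) <= Rabs dl * (2 * n)).
  { apply Rabs_mult_le; [lra|]. rewrite Rabs_mult, (Rabs_pos_eq 2) by lra. lra. }
  assert (Rabs (dl * (2 * x1 + p2)) <= Rabs dl * (2 * n + 6 * (n * n))).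
  { apply Rabs_mult_le; [lra|].
    pose proof (Rabs_triang (2 * x1) p2). rewrite Rabs_mult, (Rabs_pos_eq 2) in * by lra. lra. }
  (* since n > 1/3, lower powers of n are dominated by higher ones *)
  assert (Hn2 : n <= 3 * n ^ 2) by (simpl; nra).
  assert (Hn3 : n ^ 2 <= 3 * n ^ 3) by (simpl; nra).
  assert (Rabs dl <= Rabs dl * (3 * n)) by (rewrite <- (Rmult_1_r (Rabs dl)) at 1;
    apply Rmult_le_compat_l; lra).
  assert (Rabs dl * n <= Rabs dl * (3 * n ^ 2)) by (apply Rmult_le_compat_l; auto).
  assert (Rabs dl * n ^ 2 <= Rabs dl * (3 * n ^ 3)) by (apply Rmult_le_compat_l; auto).
  unfold expansion_bounds. replace (2 * dl * x1) with (dl * (2 * x1)) by ring.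
  unfold Rminus. split; [|split].
  - eapply Rle_trans; [apply Rabs_triang|]. rewrite Rabs_Ropp. lra.
  - eapply Rle_trans; [apply Rabs_triang|]. rewrite Rabs_Ropp. lra.
  - lra.
Qed.

(** * The model of the angular shift in the two regimes *)

Section Model.
Variables z1 z2 pw qw pv qv n : R.
Hypothesis Hw : pw * pw + qw * qw = 1.
Hypothesis Hv : pv * pv + qv * qv = 1.
Hypothesis Hh : 0 < 1 + z2.
Hypothesis Hnorm : n * n = z1 * z1 + z2 * z2.
Hypothesis Hn0 : 0 <= n.

Lemma z1_le : Rabs z1 <= n.
Proof. apply Rabs_le_sq; nra. Qed.

Lemma z2_le : Rabs z2 <= n.
Proof. apply Rabs_le_sq; nra. Qed.

Lemma dot_le : Rabs (dot pw qw pv qv) <= 1.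
Proof. pose proof (dot_cross_unit _ _ _ _ Hw Hv). apply Rabs_le_sq; nra. Qed.

Lemma cross_le : Rabs (cross pw qw pv qv) <= 1.
Proof. pose proof (dot_cross_unit _ _ _ _ Hw Hv). apply Rabs_le_sq; nra. Qed.

(* [g1] is the imaginary part of [conj z] times a unit complex number. *)
Lemma g1_le : Rabs (g1 z1 z2 pw qw pv qv) <= n.
Proof.
  pose proof (product_unit _ _ _ _ Hw Hv) as Hu. apply Rabs_le_sq; [|exact Hn0].
  unfold g1. set (re := qw * qv - pw * pv) in *. set (im := pw * qv + qw * pv) in *.
  assert (E : (z1 * im - z2 * re) * (z1 * im - z2 * re) + (z1 * re + z2 * im) * (z1 * re + z2 * im)
              = (z1 * z1 + z2 * z2) * (re ^ 2 + im ^ 2)) by ring.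
  rewrite Hu, Rmult_1_r, <- Hnorm in E.
  pose proof (Rle_0_sqr (z1 * re + z2 * im)). unfold Rsqr in *. lra.
Qed.

Lemma g2_le : Rabs (g2 z1 z2 pw qw pv qv) <= n * n.
Proof.
  unfold g2. rewrite <- Hnorm.
  replace (- (n * n) * qw * qv) with ((n * n) * - (qw * qv)) by ring.
  rewrite <- (Rmult_1_r (n * n)) at 2.
  apply Rabs_mult_le; [rewrite Rabs_pos_eq; nra|].
  rewrite Rabs_Ropp. apply Rabs_le_sq; nra.
Qed.

Lemma ash_model_small :
  let G := g1 z1 z2 pw qw pv qv + g2 z1 z2 pw qw pv qv in
  0 < 1 + z2 - dot pw qw pv qv * G ->
  ash_model z1 z2 pw qw pv qv
  = 2 * atan (cross pw qw pv qv * G / (1 + z2 - dot pw qw pv qv * G)).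
Proof.
  intros G Hden. pose proof (dot_cross_unit _ _ _ _ Hw Hv) as Hu.
  unfold ash_model. fold G.
  set (a0 := dot pw qw pv qv) in *. set (dl := cross pw qw pv qv) in *.
  destruct (Req_EM_T dl 0) as [H0|H0].
  - rewrite H0, Rmult_0_l, Rdiv_0_l, atan_0. ring.
  - assert (Hdl2 : dl * dl > 0) by (destruct (Rle_lt_dec 0 dl) as [[]|]; nra).
    assert (Hmix : 1 + a0 / dl * (((1 + z2) * a0 - G) / ((1 + z2) * dl))
                   = ((1 + z2) * (a0 ^ 2 + dl ^ 2) - a0 * G) / ((1 + z2) * (dl * dl)))
      by (field; lra).
    rewrite Hu, Rmult_1_r in Hmix.
    rewrite atan_minus, Hmix.
    + do 2 f_equal. field. repeat split; lra.
    + rewrite Hmix. apply Rdiv_lt_0_compat; [lra|]. apply Rmult_lt_0_compat; lra.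
Qed.

(* [v = -1] ([qv = 0]): the shift compares the real points [pw / qw] and its
   image under the affine map [x |-> (x - z1) / (1 + z2)]. *)
Lemma ash_model_far : qv = 0 -> qw <> 0 ->
  ash_model z1 z2 pw qw pv qv
  = 2 * (atan ((pw / qw - z1) / (1 + z2)) - atan (pw / qw)).
Proof.
  intros Hqv Hqw. subst qv.
  assert (Hpv : pv <> 0) by (intro; subst; lra).
  unfold ash_model, cross, dot, g1, g2. cbv zeta.
  destruct (Req_EM_T (pw * 0 - pv * qw) 0) as [H0|H0].
  - exfalso. apply (Rmult_integral_contrapositive _ _ (conj Hpv Hqw)). lra.
  - replace ((pw * pv + qw * 0) / (pw * 0 - pv * qw)) with (- (pw / qw)) by (field; auto).
    replace (((1 + z2) * (pw * pv + qw * 0) -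
              (z1 * (pw * 0 + qw * pv) - z2 * (qw * 0 - pw * pv) + - (z1 * z1 + z2 * z2) * qw * 0))
             / ((1 + z2) * (pw * 0 - pv * qw)))
      with (- ((pw / qw - z1) / (1 + z2))) by (field; repeat split; auto; lra).
    rewrite !atan_opp. ring.
Qed.

Lemma ash_model_expansion : n <= 1 / 3 \/ qv = 0 ->
  expansion_bounds (ash_model z1 z2 pw qw pv qv) (cross pw qw pv qv) (g1 z1 z2 pw qw pv qv)
    (second_order z2 (dot pw qw pv qv) (g1 z1 z2 pw qw pv qv) (g2 z1 z2 pw qw pv qv)) n.
Proof.
  intro Hcase.
  pose proof z1_le as Hz1; pose proof z2_le as Hz2; pose proof dot_le as Hdot.
  pose proof cross_le as Hcross; pose proof g1_le as Hg1; pose proof g2_le as Hg2.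
  destruct (Rle_dec n (1 / 3)) as [Hsmall|Hlarge].
  - rewrite ash_model_small by (pose proof (den_lower n z2 (dot pw qw pv qv)
      (g1 z1 z2 pw qw pv qv) (g2 z1 z2 pw qw pv qv)); lra).
    apply small_expansion; auto.
  - destruct Hcase as [|Hqv]; [contradiction|].
    assert (Hpv : Rabs pv = 1).
    { assert (Rabs pv * Rabs pv = 1) by (rewrite <- Rabs_mult, Rabs_pos_eq; subst qv; nra).
      pose proof (Rabs_pos pv). nra. }
    assert (Hcr : Rabs (cross pw qw pv qv) = Rabs qw)
      by (unfold cross; subst qv; rewrite Rmult_0_r, Rminus_0_l, Rabs_Ropp, Rabs_mult, Hpv; ring).
    destruct (Req_EM_T qw 0) as [Hqw|Hqw].
    + (* both points of the circle coincide *)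
      assert (Hdl : cross pw qw pv qv = 0) by (unfold cross; subst; ring).
      replace (ash_model z1 z2 pw qw pv qv) with 0
        by (unfold ash_model; destruct (Req_EM_T _ 0); [reflexivity | contradiction]).
      rewrite Hdl. apply expansion_bounds_zero.
    + apply far_expansion; [lra|auto| |].
      * apply second_order_le; auto.
      * rewrite ash_model_far, Hcr by auto.
        rewrite Rabs_mult, (Rabs_pos_eq 2) by lra.
        assert (Hshift : Rabs (atan ((pw / qw - z1) / (1 + z2)) - atan (pw / qw))
                         <= 12 * (1 + n) * Rabs qw)
          by (apply atan_shift; auto; [lra | pose proof (Rabs_le_inv _ _ Hz2); lra]).
        lra.
Qed.
End Model.

Theorem mainTheorem11 :
  exists c0 : R,
  forall (a b c d : R) (z v w : Cx),
    a * d - b * c > 0 ->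
    inH (Cadd Ci z) ->
    mobH a b c d (Some (Cadd Ci z)) = Some Ci ->
    Cnorm v = 1 -> Cnorm w = 1 ->
    (Cnorm z <= 1 / 3 \/ v = Cof (-1)) ->
    let A := ash a b c d v w in
    let eps3 := A - Re (Cmul (Csub (Cconj w) (Cconj v))
                  (Csub (Copp z)
                     (Cmul (Cdiv (Cmul Ci (Cadd (Cadd (Cof 2) (Cconj v)) (Cconj w))) (Cof 4))
                           (Cmul z z)))) in
    let eps2 := A + Re (Cmul (Csub (Cconj w) (Cconj v)) z) in
    let eps1 := A in
    (Rabs eps3 <= c0 * Cnorm (Csub w v) * Cnorm z ^ 3 /\
     c0 * Cnorm (Csub w v) * Cnorm z ^ 3 <= 2 * c0 * Cnorm z ^ 3) /\
    (Rabs eps2 <= c0 * Cnorm (Csub w v) * Cnorm z ^ 2 /\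
     c0 * Cnorm (Csub w v) * Cnorm z ^ 2 <= 2 * c0 * Cnorm z ^ 2) /\
    (Rabs eps1 <= c0 * Cnorm (Csub w v) * Cnorm z /\
     c0 * Cnorm (Csub w v) * Cnorm z <= 2 * c0 * Cnorm z).
Proof.
  exists 500.
  intros a b c d [z1 z2] v w Hdet HinH Hmob Hv Hw Hcase. cbv zeta.
  assert (Hh : 0 < 1 + z2) by (unfold inH in HinH; cx_unfold; lra).
  destruct (mobH_normalization _ _ _ _ _ _ Hmob) as [-> ->].
  destruct (unit_half_angle v Hv) as (pv & qv & Hpv & ->).
  destruct (unit_half_angle w Hw) as (pw & qw & Hpw & ->).
  assert (Hcase' : Cnorm (z1, z2) <= 1 / 3 \/ qv = 0).
  { destruct Hcase as [|Hm1]; [now left|right].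
    rewrite cayley_unit in Hm1 by auto. injection Hm1 as H1 _. nra. }
  rewrite ash_normalized, second_order_term, first_order_term, chord_length by (auto; lra).
  set (n := Cnorm (z1, z2)) in *.
  assert (Hn0 : 0 <= n) by apply sqrt_pos.
  assert (Hn : n * n = z1 * z1 + z2 * z2) by (apply sqrt_sqrt; nra).
  destruct (ash_model_expansion z1 z2 pw qw pv qv n Hpw Hpv Hh Hn Hn0 Hcase') as (B3 & B2 & B1).
  pose proof (cross_le pw qw pv qv Hpw Hpv).
  pose proof (Rabs_pos (cross pw qw pv qv)).
  assert (0 <= n ^ 2) by (apply pow_le; lra). assert (0 <= n ^ 3) by (apply pow_le; lra).
  unfold Rminus in *. repeat split; nra.
Qed.
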